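(* Let $N\ge M\ge1$, let $(w_1,\dots,w_N)$ be a (generic) alphabet and let $y=(y_1,\dots,y_M)\in\mathbb{Z}^M$ be any collection of integers. Then for every $k\in\{1,\dots,N\}$, \[\mathcal{F}_y(w_1,\dots,w_N)\big|_{w_k=0}=\alpha\,\mathcal{F}_y(w_1,\dots,w_{k-1},w_{k+1},\dots,w_N).\]
   Context: $q>0$, $q\ne1$, $\alpha\ge0$. $\mathcal{B}_N$ is the group of signed permutations of $\{1,\dots,N\}$ acting by $\sigma(f(w_1,\dots,w_N))=f(w_{\sigma(1)},\dots,w_{\sigma(N)})$ with $w_{-k}:=1/(qw_k)$. With $V_k=\frac{q^{\binom{k}{2}}(1-q)^k}{\prod_{i=1}^k(1-q^i)(1+q^{i-1})}$ and $\varphi_y(w)=\frac{1-q-\alpha+\alpha w}{1-qw^2}\frac{(1-q)w}{1-w}\left(\frac{1-qw}{1-w}\right)^{y-1}$, for an alphabet of length $n\ge M$, \[\mathcal{F}_y(w_1,\dots,w_n)=V_{n-M}\alpha^{n-M}\sum_{\sigma\in\mathcal{B}_n}\sigma\!\left(\prod_{1\le i<j\le n}\left[\frac{w_i-qw_j}{w_i-w_j}\frac{1-w_iw_j}{1-qw_iw_j}\right]\prod_{i=1}^M\varphi_{y_i}(w_i)\right),\] and $\mathcal{F}_y(w_1,\dots,w_n):=0$ if $n<M$. *)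

From HB Require Import structures.
From mathcomp Require Import all_boot all_order all_algebra all_fingroup.
From mathcomp Require Import all_classical all_reals all_analysis.
Set Implicit Arguments. Unset Strict Implicit. Unset Printing Implicit Defensive.
Import Order.TTheory GRing.Theory Num.Theory.
Local Open Scope ring_scope.

Section Defs.
Variable R : realType.

Definition Vk (q : R) (k : nat) : R :=
  q ^+ 'C(k, 2) * (1 - q) ^+ k /
  \prod_(1 <= i < k.+1) ((1 - q ^+ i) * (1 + q ^+ i.-1)).

Definition phi (q alpha : R) (y : int) (w : R) : R :=
  (1 - q - alpha + alpha * w) / (1 - q * w ^+ 2) * ((1 - q) * w / (1 - w))
  * ((1 - q * w) / (1 - w)) ^ (y - 1).

Definition pairf (q a b : R) : R :=
  (a - q * b) / (a - b) * ((1 - a * b) / (1 - q * a * b)).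

(* w_{-k} := 1/(q w_k) : the value of the signed letter *)
Definition signed_val (q : R) (neg : bool) (x : R) : R :=
  if neg then 1 / (q * x) else x.

(* The letters (w_{sigma(1)}, ..., w_{sigma(n)}) for the signed permutation
   sigma given by the permutation s of {1..n} and the signs e
   (sigma(i) = - s(i) iff e i). *)
Definition signed_letters (q : R) (ws : seq R) (n : nat)
  (s : 'S_n) (e : {ffun 'I_n -> bool}) : seq R :=
  [seq signed_val q (e i) (nth 0 ws (s i)) | i <- enum 'I_n].

Definition summand (q alpha : R) (y : seq int) (n : nat) (vs : seq R) : R :=
  (\prod_(0 <= i < n) \prod_(i.+1 <= j < n) pairf q (nth 0 vs i) (nth 0 vs j))
  * \prod_(0 <= i < size y) phi q alpha (nth 0 y i) (nth 0 vs i).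

Definition Fy (q alpha : R) (y : seq int) (ws : seq R) : R :=
  let n := size ws in
  let M := size y in
  if (n < M)%N then 0 else
  Vk q (n - M) * alpha ^+ (n - M) *
  \sum_(s : 'S_n) \sum_(e : {ffun 'I_n -> bool})
     summand q alpha y n (signed_letters q ws s e).

(* A generic alphabet: none of the denominators occurring in the summands of
   F_y vanish, i.e. w_i not in {0, 1, 1/q}, q w_i^2 <> 1, and for i <> j,
   w_i <> w_j and q w_i w_j <> 1. *)
Definition generic (q : R) (ws : seq R) : Prop :=
  (forall i, (i < size ws)%N ->
     let x := nth 0 ws i in
     [/\ x != 0, x != 1, q * x != 1 & q * x ^+ 2 != 1]) /\
  (forall i j, (i < size ws)%N -> (j < size ws)%N -> i <> j ->
     nth 0 ws i != nth 0 ws j /\ q * nth 0 ws i * nth 0 ws j != 1).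

Definition remove_at (ws : seq R) (k : nat) : seq R :=
  take k ws ++ drop k.+1 ws.

End Defs.

(* Sort the signed permutations of the N letters by the position i that
   receives w_k and by the sign it carries there; what remains is a signed
   permutation of the other N - 1 letters.  As t := w_k -> 0, the letter in
   position i is t or 1/(q t) -> oo.  Every pair factor with w_k on the right
   tends to 1, every one with w_k on the left tends to q (resp. 1/q), and
   phi_{y_i}(w_k) -> 0 kills the positions i <= M.  The surviving weights add
   up to sum_{j=0}^{N-1-M} (q^j + q^-j), and V_{N-M} times this sum is
   V_{N-1-M}; one factor alpha is left over. *)

From HB Require Import structures.
From mathcomp Require Import all_boot all_order all_algebra all_fingroup.
From mathcomp Require Import all_classical all_reals all_analysis.
From mathcomp Require Import zify ring.
Set Implicit Arguments. Unset Strict Implicit. Unset Printing Implicit Defensive.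
Import Order.TTheory GRing.Theory Num.Theory.
Import numFieldNormedType.Exports.
Local Open Scope ring_scope.
Local Open Scope classical_set_scope.

Section exponent_limits.
Context {K : numFieldType} {T : Type} (F : set_system T) {FF : Filter F}.
Implicit Types (f : T -> K) (a : K).

Lemma cvg_exprn f a n : f @ F --> a -> f t ^+ n @[t --> F] --> a ^+ n.
Proof.
move=> fa; elim: n => [|n IHn].
  by rewrite expr0; under eq_fun do rewrite expr0; exact: cvg_cst.
by rewrite exprS; under eq_fun do rewrite exprS; exact: cvgM.
Qed.

Lemma cvg_exprz f a (z : int) : a != 0 -> f @ F --> a -> f t ^ z @[t --> F] --> a ^ z.
Proof.
move=> a0 fa; case: z => n /=; first exact: cvg_exprn.
by apply: cvgV; [rewrite expf_neq0 | exact: cvg_exprn].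
Qed.

End exponent_limits.

Lemma divMMr (R : fieldType) (a b c : R) : c != 0 -> a * c / (b * c) = a / b.
Proof. by move=> c0; rewrite -mulf_div divff ?mulr1. Qed.

Section factor_limits.
Variable R : realType.
Variables q alpha : R.
Hypothesis q0 : q != 0.

Lemma cvg_dnbhs0_id : t @[t --> (0 : R)^'] --> (0 : R).
Proof. exact: cvg_within_filter cvg_id. Qed.

Lemma cvg_dnbhs0_eq (f g : R -> R) (l : R) : (forall t, t != 0 -> f t = g t) ->
  g t @[t --> 0^'] --> l -> f t @[t --> 0^'] --> l.
Proof.
move=> fg; apply: cvg_trans; apply: near_eq_cvg.
by near=> t; rewrite fg //; near: t; exact: nbhs_dnbhs_neq.
Unshelve. all: end_near.
Qed.

Ltac cvg_rational :=
  repeat first [ exact: cvg_cst | exact: cvg_dnbhs0_id | apply: cvgM | apply: cvgV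
               | apply: cvgD | apply: cvgN | apply: cvg_exprn | apply: cvg_exprz ].

Ltac simpl_at0 :=
  rewrite ?(mulr0, mul0r, subr0, sub0r, addr0, add0r, expr0n, mulr1, mul1r, divr1)
          ?(oppr_eq0, oner_eq0, invr_eq0, mulf_neq0) //=.

Lemma pairf_signed_cvgl b x : x != 0 ->
  pairf q (signed_val q b t) x @[t --> 0^'] --> (if b then q^-1 else q).
Proof.
move=> x0; case: b => /=; last first.
  rewrite [X in _ --> X](_ : q = pairf q 0 x); last by rewrite /pairf; field; rewrite x0.
  by rewrite /pairf; cvg_rational; simpl_at0.
pose g t := (1 - q ^+ 2 * x * t) / (1 - q * x * t) * ((q * t - x) / (q * (t - x))).
apply: (@cvg_dnbhs0_eq _ g) => [t t0|].
  have qt0 : q * t != 0 by rewrite mulf_neq0.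
  (* Clearing 1/(q t) in numerator and denominator separately keeps the
     identity true also where a denominator vanishes. *)
  rewrite /pairf /g -[X in X * _](divMMr _ _ qt0) -[X in _ * X](divMMr _ _ qt0).
  by congr (_ / _ * (_ / _)); field; rewrite t0 q0.
rewrite [X in _ --> X](_ : q^-1 = g 0); last by rewrite /g; field; rewrite x0 q0.
by rewrite /g; cvg_rational; simpl_at0.
Qed.

Lemma pairf_signed_cvgr b x : x != 0 ->
  pairf q x (signed_val q b t) @[t --> 0^'] --> (1 : R).
Proof.
move=> x0; case: b => /=; last first.
  rewrite [X in _ --> X](_ : (1 : R) = pairf q x 0); last by rewrite /pairf; field; rewrite x0.
  by rewrite /pairf; cvg_rational; simpl_at0.
pose g t := (q * x * t - q) / (q * x * t - 1) * ((q * t - x) / (q * (t - x))).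
apply: (@cvg_dnbhs0_eq _ g) => [t t0|].
  have qt0 : q * t != 0 by rewrite mulf_neq0.
  rewrite /pairf /g -[X in X * _](divMMr _ _ qt0) -[X in _ * X](divMMr _ _ qt0).
  by congr (_ / _ * (_ / _)); field; rewrite t0 q0.
rewrite [X in _ --> X](_ : (1 : R) = g 0); last by rewrite /g; field; rewrite x0 q0.
by rewrite /g; cvg_rational; simpl_at0.
Qed.

Lemma phi_signed_cvg b z : phi q alpha z (signed_val q b t) @[t --> 0^'] --> (0 : R).
Proof.
case: b => /=; last first.
  rewrite [X in _ --> X](_ : (0 : R) = phi q alpha z 0); last by rewrite /phi; simpl_at0.
  by rewrite /phi; cvg_rational; simpl_at0.
pose g t := ((1 - q - alpha) * q * t ^+ 2 + alpha * t) / (q * t ^+ 2 - 1)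
  * ((1 - q) / (q * t - 1)) * ((q * t - q) / (q * t - 1)) ^ (z - 1).
apply: (@cvg_dnbhs0_eq _ g) => [t t0|].
  have qt0 : q * t != 0 by rewrite mulf_neq0.
  have qt20 : q * t ^+ 2 != 0 by rewrite mulf_neq0 // expf_neq0.
  rewrite /phi /g -[X in X * _ * _](divMMr _ _ qt20) -[X in _ * X * _](divMMr _ _ qt0).
  rewrite -[X in _ * (X ^ _)](divMMr _ _ qt0).
  by congr (_ / _ * (_ / _) * ((_ / _) ^ _)); field; rewrite t0 q0.
rewrite [X in _ --> X](_ : (0 : R) = g 0); last by rewrite /g; simpl_at0.
by rewrite /g; cvg_rational; simpl_at0.
Qed.

End factor_limits.

Definition ins {T : Type} (i : nat) (v : T) (f : nat -> T) (j : nat) : T :=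
  if (j < i)%N then f j else if j == i then v else f j.-1.

Lemma ins_bump {T : Type} i (v : T) f j : ins i v f (bump i j) = f j.
Proof.
rewrite /ins /bump; case: (leqP i j) => [le_ij | lt_ji] /=; last by rewrite lt_ji.
by rewrite add1n ifF ?ifF //; lia.
Qed.

Lemma ins_id {T : Type} i (v : T) f : ins i v f i = v.
Proof. by rewrite /ins ltnn eqxx. Qed.

Lemma ins_neq {T : Type} i (v w : T) f j : j != i -> ins i v f j = ins i w f j.
Proof. by move=> /negbTE ji; rewrite /ins ji. Qed.

Definition ffun_ins {T : Type} n (i : 'I_n.+1) (v : T) (e : {ffun 'I_n -> T}) :
  {ffun 'I_n.+1 -> T} := [ffun j => if unlift i j is Some j' then e j' else v].

Section reindexing.
Variables (R : Type) (idx : R) (op : Monoid.com_law idx).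

Lemma reindex_inj_card (I J : finType) (h : J -> I) (F : I -> R) :
  injective h -> (#|I| <= #|J|)%N ->
  \big[op/idx]_(i : I) F i = \big[op/idx]_(j : J) F (h j).
Proof. by move=> hinj hcard; apply: reindex; apply: onW_bij; exact: inj_card_bij. Qed.

Lemma big_lift_perm n (k : 'I_n.+1) (F : 'S_n.+1 -> R) :
  \big[op/idx]_(s : 'S_n.+1) F s =
  \big[op/idx]_(i < n.+1) \big[op/idx]_(s : 'S_n) F (lift_perm i k s).
Proof.
rewrite pair_big /= (@reindex_inj_card _ _ (fun p => lift_perm p.1 k p.2)) //.
  move=> [i s] [i' s'] /= eq_ss'.
  have eq_ii' : i = i'.
    by apply: (@perm_inj _ (lift_perm i k s)); rewrite {2}eq_ss' !lift_perm_id.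
  case: _ / eq_ii' in eq_ss' *; congr pair; apply/permP => j.
  by apply: (@lift_inj _ k); rewrite -!(lift_perm_lift i) eq_ss'.
by rewrite card_prod !card_Sn card_ord factS.
Qed.

Lemma big_ffun_ins (T : finType) n (i : 'I_n.+1) (F : {ffun 'I_n.+1 -> T} -> R) :
  \big[op/idx]_(e : {ffun 'I_n.+1 -> T}) F e =
  \big[op/idx]_(v : T) \big[op/idx]_(e : {ffun 'I_n -> T}) F (ffun_ins i v e).
Proof.
rewrite pair_big /= (@reindex_inj_card _ _ (fun p => ffun_ins i p.1 p.2)) //.
  move=> [v e] [v' e'] /= /ffunP eq_ee'; congr pair.
    by have := eq_ee' i; rewrite !ffunE unlift_none.
  by apply/ffunP => j; have := eq_ee' (lift i j); rewrite !ffunE liftK.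
by rewrite card_prod !card_ffun !card_ord expnS.
Qed.

End reindexing.

Section weight.
Variable R : realType.
Variables q alpha : R.

Definition pair_prod n (f : nat -> R) : R :=
  \prod_(a < n) \prod_(b < n) (if (a < b)%N then pairf q (f a) (f b) else 1).

Definition phi_prod (y : seq int) (f : nat -> R) : R :=
  \prod_(0 <= a < size y) phi q alpha (nth 0 y a) (f a).

Definition weight y n f : R := pair_prod n f * phi_prod y f.

Lemma summand_weight y n vs : summand q alpha y n vs = weight y n (nth 0 vs).
Proof.
rewrite /summand /weight /pair_prod big_mkord; congr (_ * _).
by apply: eq_bigr => a _; rewrite big_geq_mkord big_mkcond.
Qed.

Lemma pair_prod_ins n (i : 'I_n.+1) v f :
  pair_prod n.+1 (ins i v f) =
  \prod_(b < n | (i <= b)%N) pairf q v (f b) *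
  \prod_(a < n | (a < i)%N) pairf q (f a) v * pair_prod n f.
Proof.
rewrite /pair_prod (bigD1_ord i) //= (bigD1_ord i) //= ltnn mul1r.
under [X in _ * X]eq_bigr do rewrite (bigD1_ord i) //=.
rewrite big_split /= mulrA !ins_id; congr (_ * _ * _).
- rewrite [RHS]big_mkcond; apply: eq_bigr => b _; rewrite ins_bump.
  by congr (if _ then _ else _); rewrite /bump; case: leqP; lia.
- rewrite [RHS]big_mkcond; apply: eq_bigr => a _; rewrite ins_bump.
  by congr (if _ then _ else _); rewrite /bump; case: leqP; lia.
- apply: eq_bigr => a _; apply: eq_bigr => b _.
  by rewrite !ins_bump ltnNge leq_bump2 -ltnNge.
Qed.

Hypothesis q0 : q != 0.

Lemma phi_prod_ins_cvg y (i : nat) b f :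
  phi_prod y (ins i (signed_val q b t) f) @[t --> 0^'] -->
  (if (size y <= i)%N then phi_prod y f else 0).
Proof.
pose lim_phi a := if a == i then 0 else phi q alpha (nth 0 y a) (ins i 0 f a).
have -> : (if (size y <= i)%N then phi_prod y f else 0) = \prod_(0 <= a < size y) lim_phi a.
  case: leqP => [le_yi | lt_iy].
    apply: eq_big_nat => a /andP[_ /leq_trans/(_ le_yi) lt_ai].
    by rewrite /lim_phi ltn_eqF // /ins lt_ai.
  apply/esym/eqP; rewrite prodf_seq_eq0; apply/hasP; exists i.
    by rewrite mem_index_iota.
  by rewrite /lim_phi !eqxx.
apply: (cvg_big mul_continuous) => // a _.
rewrite /lim_phi; case: eqP => [->|/eqP ai].
  by under eq_fun do rewrite ins_id; exact: phi_signed_cvg.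
by under eq_fun do rewrite (ins_neq _ 0 _ ai); exact: cvg_cst.
Qed.

Lemma weight_ins_cvg y n (i : 'I_n.+1) b f : (forall j, (j < n)%N -> f j != 0) ->
  weight y n.+1 (ins i (signed_val q b t) f) @[t --> 0^'] -->
  (if (size y <= i)%N then (if b then q^-1 else q) ^+ (n - i) else 0) * weight y n f.
Proof.
move=> f_neq0; set c := if b then q^-1 else q.
have prod_c : \prod_(j < n | (i <= j)%N) c = c ^+ (n - i).
  by rewrite -(@big_geq_mkord _ _ _ i n xpredT (fun=> c)) prodr_const_nat.
have -> : (if (size y <= i)%N then c ^+ (n - i) else 0) * weight y n f =
    \prod_(j < n | (i <= j)%N) c * \prod_(j < n | (j < i)%N) 1 * pair_prod n f *
    (if (size y <= i)%N then phi_prod y f else 0).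
  by rewrite prod_c big1_eq mulr1 /weight; case: ifP; rewrite ?mul0r ?mulr0 // mulrA.
rewrite /weight; under eq_fun do rewrite pair_prod_ins.
apply: cvgM; last exact: phi_prod_ins_cvg.
apply: cvgM; last exact: cvg_cst.
apply: cvgM; apply: (cvg_big mul_continuous) => // j _.
  exact: pairf_signed_cvgl (f_neq0 _ (ltn_ord j)).
exact: pairf_signed_cvgr (f_neq0 _ (ltn_ord j)).
Qed.

End weight.

Section letters.
Variables (R : realType) (q : R).

Lemma size_signed_letters ws n (s : 'S_n) e : size (signed_letters q ws s e) = n.
Proof. by rewrite size_map size_enum_ord. Qed.

Lemma nth_signed_letters ws n (s : 'S_n) e (j : 'I_n) :
  nth 0 (signed_letters q ws s e) j = signed_val q (e j) (nth 0 ws (s j)).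
Proof. by rewrite /signed_letters (nth_map j) ?size_enum_ord // nth_ord_enum. Qed.

Lemma nth_set_nth_lift (ws : seq R) n (k : 'I_n.+1) t (j : 'I_n) :
  size ws = n.+1 -> nth 0 (set_nth 0 ws k t) (lift k j) = nth 0 (remove_at ws k) j.
Proof.
move=> size_ws; rewrite nth_set_nth /= ifN_eq 1?eq_sym ?neq_bump //.
rewrite /remove_at nth_cat size_take size_ws ltn_ord /bump.
case: (ltnP j k) => [lt_jk | le_kj]; first by rewrite nth_take // leqNgt lt_jk.
by rewrite nth_drop add1n; congr nth; lia.
Qed.

Lemma signed_letters_ins (ws : seq R) n (k i : 'I_n.+1) t (s : 'S_n) b e :
  size ws = n.+1 ->
  nth 0 (signed_letters q (set_nth 0 ws k t) (lift_perm i k s) (ffun_ins i b e)) =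
  ins i (signed_val q b t) (nth 0 (signed_letters q (remove_at ws k) s e)).
Proof.
move=> size_ws; apply/funext => j; case: (ltnP j n.+1) => [lt_jn | le_nj].
  have -> : j = Ordinal lt_jn by [].
  rewrite nth_signed_letters ffunE.
  case: (unliftP i (Ordinal lt_jn)) => [j'|] -> /=; last first.
    by rewrite lift_perm_id ins_id nth_set_nth /= eqxx.
  by rewrite lift_perm_lift ins_bump nth_signed_letters nth_set_nth_lift.
have lt_ij : (i < j)%N by apply: leq_trans (ltn_ord i) le_nj.
rewrite /ins ltnNge (ltnW lt_ij) gtn_eqF //= !nth_default ?size_signed_letters //; lia.
Qed.

Lemma signed_letters_neq0 ws n (s : 'S_n) e j : q != 0 ->
  (forall i, (i < n)%N -> nth 0 ws i != 0) -> (j < n)%N ->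
  nth 0 (signed_letters q ws s e) j != 0.
Proof.
move=> q0 ws_neq0 lt_jn; rewrite -[j]/(nat_of_ord (Ordinal lt_jn)) nth_signed_letters.
have := ws_neq0 _ (ltn_ord (s (Ordinal lt_jn))).
by case: (e _) => //= x0; rewrite div1r invr_eq0 mulf_neq0.
Qed.

End letters.

Section Vk_recursion.
Variables (R : realType) (q : R).

Lemma VkS m :
  Vk q m.+1 = Vk q m * (q ^+ m * (1 - q) / ((1 - q ^+ m.+1) * (1 + q ^+ m))).
Proof. by rewrite /Vk big_nat_recr //= binS bin1 exprD exprS !invfM; ring. Qed.

Lemma VkS_mul_sum m : 0 < q -> q != 1 ->
  Vk q m.+1 * \sum_(j < m.+1) (q ^+ j + q^-1 ^+ j) = Vk q m.
Proof.
move=> q_gt0 q1; have q0 : q != 0 := lt0r_neq0 q_gt0.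
have geom (x : R) : x != 1 -> \sum_(j < m.+1) x ^+ j = (x ^+ m.+1 - 1) / (x - 1).
  by move=> x1; rewrite subrX1 mulrC mulKf // subr_eq0.
have qm1 : 1 - q * q ^+ m != 0 by rewrite -exprS subr_eq0 eq_sym pexpr_eq1 // ltW.
have qm2 : 1 + q ^+ m != 0 by rewrite lt0r_neq0 // ltr_pwDr // exprn_gt0.
have qm0 : q ^+ m != 0 by rewrite expf_neq0.
rewrite VkS big_split /= !geom ?invr_eq1 // !exprVn !exprS.
by field; rewrite q0 qm0 qm1 qm2 mulN1r !subr_eq0 eq_sym q1.
Qed.

End Vk_recursion.

Section specialization.
Variables (R : realType) (q alpha : R).

Lemma sum_limit_coefs n M :
  \sum_(i < n.+1) \sum_(b : bool)
     (if (M <= i)%N then (if b then q^-1 else q) ^+ (n - i) else 0) =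
  \sum_(j < n.+1 - M) (q ^+ j + q^-1 ^+ j).
Proof.
rewrite (big_ord_widen n.+1 (fun j => q ^+ j + q^-1 ^+ j)) ?leq_subr //.
rewrite [RHS]big_mkcond (reindex_inj rev_ord_inj) /=; apply: eq_bigr => i _.
rewrite big_bool /= subSS subKn; last by rewrite -ltnS.
have lt_in := ltn_ord i.
have -> : (i < n.+1 - M)%N = (M <= n - i)%N by apply/idP/idP; lia.
by case: ifP; rewrite ?addr0 // addrC.
Qed.

(* [size ws] is abstracted so that it can be rewritten inside the types ['S_m]. *)
Lemma FyE y (ws : seq R) m : size ws = m ->
  Fy q alpha y ws = if (m < size y)%N then 0 else
    Vk q (m - size y) * alpha ^+ (m - size y) *
    \sum_(s : 'S_m) \sum_(e : {ffun 'I_m -> bool})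
      summand q alpha y m (signed_letters q ws s e).
Proof. by move=> <-. Qed.

Lemma Fy_set_nthE (ws : seq R) n (k : 'I_n.+1) y t :
  size ws = n.+1 -> (size y <= n.+1)%N ->
  Fy q alpha y (set_nth 0 ws k t) = Vk q (n.+1 - size y) * alpha ^+ (n.+1 - size y) *
  \sum_(i < n.+1) \sum_(b : bool) \sum_(s : 'S_n) \sum_(e : {ffun 'I_n -> bool})
    weight q alpha y n.+1
      (ins i (signed_val q b t) (nth 0 (signed_letters q (remove_at ws k) s e))).
Proof.
move=> size_ws le_yn.
have size_set : size (set_nth 0 ws k t) = n.+1.
  by rewrite size_set_nth size_ws; exact/maxn_idPr.
rewrite (FyE _ size_set) ltnNge le_yn /= (big_lift_perm _ k) /=; congr (_ * _).
apply: eq_bigr => i _; rewrite [RHS]exchange_big; apply: eq_bigr => s _ /=.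
rewrite (big_ffun_ins _ i); apply: eq_bigr => b _; apply: eq_bigr => e _.
by rewrite summand_weight signed_letters_ins.
Qed.

Lemma alpha_FyE (ws : seq R) n y : 0 < q -> q != 1 ->
  size ws = n -> (size y <= n.+1)%N ->
  alpha * Fy q alpha y ws = Vk q (n.+1 - size y) * alpha ^+ (n.+1 - size y) *
  \sum_(i < n.+1) \sum_(b : bool) \sum_(s : 'S_n) \sum_(e : {ffun 'I_n -> bool})
    (if (size y <= i)%N then (if b then q^-1 else q) ^+ (n - i) else 0) *
    weight q alpha y n (nth 0 (signed_letters q ws s e)).
Proof.
move=> q_gt0 q1 size_ws le_yn.
have -> : \sum_(i < n.+1) \sum_(b : bool) \sum_(s : 'S_n) \sum_(e : {ffun 'I_n -> bool})
    (if (size y <= i)%N then (if b then q^-1 else q) ^+ (n - i) else 0) *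
    weight q alpha y n (nth 0 (signed_letters q ws s e)) =
  (\sum_(j < n.+1 - size y) (q ^+ j + q^-1 ^+ j)) *
  \sum_(s : 'S_n) \sum_(e : {ffun 'I_n -> bool}) summand q alpha y n (signed_letters q ws s e).
  rewrite -sum_limit_coefs big_distrl; apply: eq_bigr => i _ /=.
  rewrite big_distrl; apply: eq_bigr => b _ /=.
  rewrite big_distrr; apply: eq_bigr => s _ /=.
  by rewrite big_distrr; apply: eq_bigr => e _; rewrite summand_weight.
rewrite (FyE _ size_ws); case: ltnP => [lt_ny | le_yn'].
  by rewrite (_ : n.+1 - size y = 0)%N ?big_ord0 ?mul0r ?mulr0 //; apply/eqP; rewrite subn_eq0.
rewrite subSn // -(VkS_mul_sum _ q_gt0 q1) exprS; ring.
Qed.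

End specialization.

(* k is 0-based here: the letter w_{k+1} is specialized to 0, the
   specialization being the limit w_{k+1} -> 0 (w_{k+1} <> 0). *)
Theorem proposition6p3 (R : realType) (q alpha : R)
  (hq0 : 0 < q) (hq1 : q != 1) (halpha : 0 <= alpha)
  (N M : nat) (hM1 : (1 <= M)%N) (hMN : (M <= N)%N)
  (ws : seq R) (hws : size ws = N) (y : seq int) (hy : size y = M)
  (k : nat) (hk : (k < N)%N)
  (hgen : generic q (remove_at ws k)) :
  Fy q alpha y (set_nth 0 ws k t) @[t --> 0^']
    --> alpha * Fy q alpha y (remove_at ws k).
Proof.
have q0 : q != 0 := lt0r_neq0 hq0.
case: N hMN hws hk => [|n] hMN hws hk; first by move: (leq_trans hM1 hMN).
pose k0 : 'I_n.+1 := Ordinal hk.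
have size_rm : size (remove_at ws k) = n.
  by rewrite /remove_at size_cat size_take size_drop hws hk; lia.
have rm_neq0 i : (i < n)%N -> nth 0 (remove_at ws k) i != 0.
  by rewrite -size_rm => /(proj1 hgen) [].
rewrite -hy in hMN *; rewrite (alpha_FyE _ hq0 hq1 size_rm hMN).
under eq_fun do rewrite (Fy_set_nthE _ _ k0 _ hws hMN).
apply: cvgM; first exact: cvg_cst.
do 4 apply: (cvg_big add_continuous) => // ? _.
apply: weight_ins_cvg => // j; exact: signed_letters_neq0.
Qed.
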